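(* For every colouring $\psi$, there is a unique homomorphism of $\mathfrak a$-algebras $U_h(\psi)/hU_h(\psi)\to U(\mathfrak{sl}_2)$, and it is surjective.
   Context: $\mathbb k$ is a field of characteristic zero, and $\mathbb k[[h]]$ is the ring of formal power series over $\mathbb k$. For a $\mathbb k$-vector space $V_0$, $V_0[[h]]$ denotes the module of formal series $\sum_{m\ge0}v_mh^m$ with $v_m\in V_0$. $\mathfrak a$ is the Lie algebra over $\mathbb k$ generated by $H,X^-,X^+$ subject to $[H,X^\pm]=\pm2X^\pm$. An $\mathfrak a$-algebra is a $U(\mathfrak a)$-algebra, i.e. an algebra $A$ together with a structural homomorphism $U(\mathfrak a)\to A$; homomorphisms of $\mathfrak a$-algebras commute with the structural maps. $U(\mathfrak{sl}_2)$ is an $\mathfrak a$-algebra via the canonical projection, which sends $H,X^\pm$ to the Chevalley generators; these satisfy in addition $[X^+,X^-]=H$. We set $U_h(\mathfrak a):=U(\mathfrak a)[[h]]$. Any $U_h(\mathfrak a)$-algebra $A$ makes $A/hA$ an $\mathfrak a$-algebra, via $U_h(\mathfrak a)/hU_h(\mathfrak a)\cong U(\mathfrak a)$. A colouring is a sequence $\psi=(\psi^k)_{k\ge1}$ of functions $\psi^k:\mathbb Z\to\mathbb k[[h]]$ satisfying: - (C1) $\psi^k(n)\equiv k(n-k+1)\bmod h$; - (C2) $\psi^{n+1}(n)=0$ for all $n\ge0$; - (C3) $\psi^{n+k+1}(n)=\psi^k(-n-2)$ for all $k\ge1$ and all $n\ge0$. $V_h(n,\psi)$ is the representation of $U_h(\mathfrak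 a)$ on $(\bigoplus_{k\ge0}\mathbb k b_k)[[h]]$ with the following action: - $H.b_k=(n-2k)b_k$; - $X^-.b_k=b_{k+1}$; - $X^+.b_0=0$, and $X^+.b_k=\psi^k(n)b_{k-1}$ for $k\ge1$. $U_h(\psi)$ is the quotient of $U_h(\mathfrak a)$ by the two-sided ideal of elements that act by zero on $V_h(n,\psi)$ for every $n\in\mathbb Z$. It is a $U_h(\mathfrak a)$-algebra via the projection map. *)

From HB Require Import structures.
From mathcomp Require Import all_boot all_order all_algebra.
Set Implicit Arguments. Unset Strict Implicit. Unset Printing Implicit Defensive.
Import GRing.Theory.
Local Open Scope ring_scope.

Section Defs.
Variable k : fieldType.

Definition alg_hom (A B : algType k) (f : A -> B) : Prop :=
  [/\ (forall x y, f (x + y) = f x + f y),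
      (forall (c : k) x, f (c *: x) = c *: f x),
      (forall x y, f (x * y) = f x * f y) &
      f 1 = 1].

(* Defining relations of the Lie algebra a = <H, X^-, X^+ | [H,X^+-] = +-2X^+->,
   read inside an associative algebra (commutators are ring commutators). *)
Definition a_rels (B : algType k) (H Xm Xp : B) : Prop :=
  H * Xp - Xp * H = Xp *+ 2 /\ H * Xm - Xm * H = - (Xm *+ 2).

Definition sl2_rels (B : algType k) (H Xm Xp : B) : Prop :=
  a_rels H Xm Xp /\ Xp * Xm - Xm * Xp = H.

(* (A, H, Xm, Xp) is the universal enveloping algebra of the Lie algebra
   presented by the relations [rels]: the relations hold in A, and for every
   k-algebra B with elements satisfying the relations there is exactly one
   k-algebra homomorphism A -> B sending generators to those elements. *)
Definition is_enveloping
  (rels : forall B : algType k, B -> B -> B -> Prop)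
  (A : algType k) (H Xm Xp : A) : Prop :=
  rels A H Xm Xp /\
  forall (B : algType k) (H' Xm' Xp' : B), rels B H' Xm' Xp' ->
    (exists f : A -> B, [/\ alg_hom f, f H = H', f Xm = Xm' & f Xp = Xp'])
    /\ (forall f g : A -> B,
          alg_hom f -> f H = H' -> f Xm = Xm' -> f Xp = Xp' ->
          alg_hom g -> g H = H' -> g Xm = Xm' -> g Xp = Xp' ->
          forall x, f x = g x).

Definition is_Ua := is_enveloping a_rels.
Definition is_Usl2 := is_enveloping sl2_rels.

(* V0[[h]] : the series sum_m v_m h^m is the coefficient function m |-> v_m. *)
Definition pseries (T : Type) := nat -> T.

Definition ps_mul (R : pzRingType) (f g : pseries R) : pseries R :=
  fun m => \sum_(i < m.+1) f i * g (m - i)%N.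

(* psi k n = psi^k(n) in k[[h]]; only indices k >= 1 are meaningful
   (psi 0 is never used). *)
Definition colouring (psi : nat -> int -> pseries k) : Prop :=
  [/\ (forall (j : nat) (n : int), (0 < j)%N ->
                 psi j n 0%N = ((j%:Z) * (n - j%:Z + 1))%:~R),
      (forall (n : nat) (m : nat), psi n.+1 n%:Z m = 0) &
      (forall (j n : nat), (0 < j)%N ->
                 psi (n + j).+1 n%:Z = psi j (- n%:Z - 2))].

(* Ambient space (prod_i k b_i)[[h]]: v j i = coefficient of h^j b_i. *)
Definition Vamb := nat -> nat -> k.

(* V_h(n,psi) = (oplus_i k b_i)[[h]]: each h-coefficient is a finite
   combination of the b_i. *)
Definition in_Vh (v : Vamb) : Prop :=
  forall j : nat, exists N : nat, forall i : nat, (N <= i)%N -> v j i = 0.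

Definition actH (n : int) (v : Vamb) : Vamb :=
  fun j i => (n - (i%:Z *+ 2))%:~R * v j i.
Definition actXm (v : Vamb) : Vamb :=
  fun j i => if i is i'.+1 then v j i' else 0.
Definition actXp (psi : nat -> int -> pseries k) (n : int) (v : Vamb) : Vamb :=
  fun j i => \sum_(a < j.+1) psi i.+1 n a * v (j - a)%N i.+1.

(* r : Ua -> (Vamb -> Vamb) is the action of U(a) on V_h(n,psi) (extended
   to the ambient space by the same formulas): a unital algebra action
   whose generators act by the formulas above. *)
Definition is_Vh_action (Ua : algType k) (H Xm Xp : Ua)
  (psi : nat -> int -> pseries k) (n : int) (r : Ua -> Vamb -> Vamb) : Prop :=
  [/\ (forall x y v j i, r (x + y) v j i = r x v j i + r y v j i),
      (forall (c : k) x v j i, r (c *: x) v j i = c * r x v j i),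
      (forall x y v, r (x * y) v = r x (r y v)),
      (forall v, r 1 v = v) &
      [/\ (forall v, r H v = actH n v),
          (forall v, r Xm v = actXm v) &
          (forall v, r Xp v = actXp psi n v)]].

Section Uh.
Variable Ua : algType k.
Definition Uh := pseries Ua.

Definition uh_add (X Y : Uh) : Uh := fun m => X m + Y m.
Definition uh_scale (c : k) (X : Uh) : Uh := fun m => c *: X m.
Definition uh_mul (X Y : Uh) : Uh := ps_mul X Y.
Definition uh_one : Uh := fun m => if m is 0%N then 1 else 0.
Definition uh_const (x : Ua) : Uh := fun m => if m is 0%N then x else 0.
Definition uh_h (X : Uh) : Uh := fun m => if m is m'.+1 then X m' else 0.

Definition uh_act (r : Ua -> Vamb -> Vamb) (X : Uh) (v : Vamb) : Vamb :=
  fun j i => \sum_(m < j.+1) r (X m) v (j - m)%N i.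

(* The kernel of U_h(a) -> U_h(psi): elements acting by zero on every
   V_h(n,psi), n in Z. *)
Definition in_Ipsi (rho : int -> Ua -> Vamb -> Vamb) (X : Uh) : Prop :=
  forall (n : int) (v : Vamb), in_Vh v -> forall j i, uh_act (rho n) X v j i = 0.

(* The kernel of U_h(a) -> U_h(psi)/h U_h(psi): I_psi + h U_h(a). *)
Definition in_J (rho : int -> Ua -> Vamb -> Vamb) (X : Uh) : Prop :=
  exists Y Z : Uh, in_Ipsi rho Y /\ forall m, X m = Y m + uh_h Z m.

Definition uh_alg_hom (B : algType k) (f : Uh -> B) : Prop :=
  [/\ (forall X Y, f (uh_add X Y) = f X + f Y),
      (forall (c : k) X, f (uh_scale c X) = c *: f X),
      (forall X Y, f (uh_mul X Y) = f X * f Y) &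
      f uh_one = 1].

(* Homomorphisms of a-algebras U_h(psi)/h U_h(psi) -> B, where B has
   structural map s : U(a) -> B, are represented (universal property of
   the quotient) by the k-algebra homomorphisms f : U_h(a) -> B vanishing
   on the kernel I_psi + h U_h(a); the structural map of the quotient is
   U(a) ~= U_h(a)/h U_h(a) -> U_h(psi)/h U_h(psi), x |-> class of x, so
   compatibility with structural maps reads f (uh_const x) = s x. *)
Definition quot_a_hom (rho : int -> Ua -> Vamb -> Vamb)
  (B : algType k) (s : Ua -> B) (f : Uh -> B) : Prop :=
  [/\ uh_alg_hom f,
      (forall X, in_J rho X -> f X = 0) &
      (forall x, f (uh_const x) = s x)].
End Uh.

End Defs.

(* The homomorphism is [X |-> pi X_0]: it is determined by its values on
   constants because h U_h(a) lies in the kernel, and it is onto because pi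
   is. The substance is that pi X_0 = 0 whenever X acts by zero on every
   V_h(n, psi). For n >= 0, reducing V_h(n, psi) mod h and mod the span of
   the b_i with i > n leaves, by (C1), the irreducible sl_2-module of
   dimension n+1; and in characteristic 0 an element of U(sl_2) acting by zero
   on all of these is zero. For the latter, write the element in the spanning
   set F^a H^b E^c: suitable matrix entries of its action are polynomials in
   the highest weight n, and they isolate the coefficients one at a time. *)

From HB Require Import structures.
From mathcomp Require Import all_boot all_order all_algebra.
From mathcomp Require Import boolp ring zify.
Set Implicit Arguments.
Unset Strict Implicit.
Unset Printing Implicit Defensive.
Import GRing.Theory.
Local Open Scope ring_scope.

Section AlgHom.
Variables (k : fieldType) (A B : algType k) (f : A -> B) (hf : alg_hom f).

Lemma alg_homD x y : f (x + y) = f x + f y. Proof. by case: hf. Qed.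
Lemma alg_homZ (c : k) x : f (c *: x) = c *: f x. Proof. by case: hf. Qed.
Lemma alg_homM x y : f (x * y) = f x * f y. Proof. by case: hf. Qed.
Lemma alg_hom1 : f 1 = 1. Proof. by case: hf. Qed.

Lemma alg_hom0 : f 0 = 0.
Proof. by apply: (addrI (f 0)); rewrite -alg_homD !addr0. Qed.

Lemma alg_hom_sum I (r : seq I) (P : pred I) (F : I -> A) :
  f (\sum_(i <- r | P i) F i) = \sum_(i <- r | P i) f (F i).
Proof. exact: (big_morph f alg_homD alg_hom0). Qed.

Lemma alg_homX x m : f (x ^+ m) = f x ^+ m.
Proof. by elim: m => [|m IH]; rewrite ?expr0 ?alg_hom1 // !exprS alg_homM IH. Qed.
End AlgHom.

Section EnvelopingInduction.
Variables (k : fieldType) (A : algType k) (P : A -> Prop).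
Hypotheses (P1 : P 1) (PD : forall x y, P x -> P y -> P (x + y))
  (PZ : forall (c : k) x, P x -> P (c *: x)) (PM : forall x y, P x -> P y -> P (x * y)).

Definition subalg_pred : pred A := fun x => `[< P x >].

Lemma subalg_pred_closed : GRing.subsemialg_closed subalg_pred.
Proof.
have P0 : P 0 by rewrite -(scale0r (1 : A)); apply: PZ.
split; [exact/asboolP | split; first exact/asboolP | |].
- by move=> u v /asboolP Pu /asboolP Pv; apply/asboolP/PD.
- by move=> c u /asboolP Pu; apply/asboolP/PZ.
- by move=> u v /asboolP Pu /asboolP Pv; apply/asboolP/PM.
Qed.

Record subalg : Type := Subalg { subalg_val :> A; _ : subalg_pred subalg_val }.
HB.instance Definition _ := [isSub for subalg_val].
HB.instance Definition _ := [Choice of subalg by <:].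
HB.instance Definition _ := GRing.isSubalgClosed.Build k A subalg_pred subalg_pred_closed.
HB.instance Definition _ := [SubChoice_isSubAlgebra of subalg by <:].

Lemma a_rels_subalg (a b c : subalg) : a_rels (val a) (val b) (val c) -> a_rels a b c.
Proof.
by case=> hp hm; split; apply: val_inj; rewrite /= ?(rmorphB, rmorphM, rmorphMn, rmorphN).
Qed.

Lemma sl2_rels_subalg (a b c : subalg) :
  sl2_rels (val a) (val b) (val c) -> sl2_rels a b c.
Proof.
case=> /a_rels_subalg ha hc; split=> //.
by apply: val_inj; rewrite /= ?(rmorphB, rmorphM).
Qed.

(* Every element lies in the subalgebra of elements satisfying [P]: the
   universal property yields a map into that subalgebra, and its composite
   with the inclusion must be the identity. *)
Lemma enveloping_ind (rels : forall B : algType k, B -> B -> B -> Prop) (H Xm Xp : A) :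
  is_enveloping rels H Xm Xp ->
  (forall a b c : subalg, rels A (val a) (val b) (val c) -> rels subalg a b c) ->
  P H -> P Xm -> P Xp -> forall x, P x.
Proof.
move=> [relsA univ] rels_sub PH PXm PXp x.
have mk y : P y -> subalg_pred y by move=> Py; apply/asboolP.
pose sH := Subalg (mk _ PH); pose sXm := Subalg (mk _ PXm); pose sXp := Subalg (mk _ PXp).
have [[f [[fD fZ fM f1] fH fXm fXp]] _] := univ _ sH sXm sXp (rels_sub sH sXm sXp relsA).
have valf_hom : alg_hom (fun y => val (f y)).
  split=> [y z|c y|y z|]; by rewrite ?fD ?fZ ?fM ?f1 ?rmorphD ?linearZ ?rmorphM ?rmorph1.
have id_hom : alg_hom (fun y : A => y) by [].
have [_ uniq] := univ A H Xm Xp relsA.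
rewrite -(uniq _ _ valf_hom (congr1 val fH) (congr1 val fXm) (congr1 val fXp)
  id_hom erefl erefl erefl x).
exact/asboolP/(valP (f x)).
Qed.

Lemma Ua_ind (H Xm Xp : A) : is_Ua H Xm Xp -> P H -> P Xm -> P Xp -> forall x, P x.
Proof.
by move=> HA; apply: (enveloping_ind (rels := @a_rels k) HA); exact: a_rels_subalg.
Qed.

Lemma Usl2_ind (H Xm Xp : A) : is_Usl2 H Xm Xp -> P H -> P Xm -> P Xp -> forall x, P x.
Proof.
by move=> HA; apply: (enveloping_ind (rels := @sl2_rels k) HA); exact: sl2_rels_subalg.
Qed.
End EnvelopingInduction.

Lemma sum_mulrb_eq (V : nmodType) (F : nat -> V) (N m : nat) :
  \sum_(0 <= l < N) F l *+ (l == m) = F m *+ (m < N)%N.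
Proof.
rewrite mulrb -(@big_ord1_eq V 0 +%R F m N) [RHS]big_mkcond big_mkord.
by apply: eq_bigr => l _; rewrite mulrb.
Qed.

Section IrreducibleSl2.
Variables (k : fieldType) (n : nat).
Local Notation N := n.+1.

Definition mx_of (G : nat -> nat -> k) : 'M[k]_N := \matrix_(i, j) G i j.

Lemma eq_mx_of G1 G2 :
  (forall i j, (i < N)%N -> (j < N)%N -> G1 i j = G2 i j) -> mx_of G1 = mx_of G2.
Proof. by move=> eqG; apply/matrixP => i j; rewrite !mxE eqG. Qed.

Lemma mx_ofD G1 G2 : mx_of G1 + mx_of G2 = mx_of (fun i j => G1 i j + G2 i j).
Proof. by apply/matrixP => i j; rewrite !mxE. Qed.

Lemma mx_ofN G : - mx_of G = mx_of (fun i j => - G i j).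
Proof. by apply/matrixP => i j; rewrite !mxE. Qed.

Lemma mx_ofZ (c : k) G : c *: mx_of G = mx_of (fun i j => c * G i j).
Proof. by apply/matrixP => i j; rewrite !mxE. Qed.

Lemma mx_ofMn G m : mx_of G *+ m = mx_of (fun i j => G i j *+ m).
Proof. by apply/matrixP => i j; rewrite mulmxnE !mxE. Qed.

Lemma mx_ofM G1 G2 :
  mx_of G1 * mx_of G2 = mx_of (fun i j => \sum_(0 <= l < N) G1 i l * G2 l j).
Proof.
by apply/matrixP => i j; rewrite -mulmxE !mxE big_mkord; apply: eq_bigr => l _; rewrite !mxE.
Qed.

Lemma mx_of1 : 1 = mx_of (fun i j => (i == j)%:R).
Proof. by apply/matrixP => i j; rewrite !mxE. Qed.

Definition irr_wt (i : nat) : k := (n%:Z - (i%:Z *+ 2))%:~R.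
Definition irr_raise (i : nat) : k := (i.+1%:Z * (n%:Z - i.+1%:Z + 1))%:~R.

Definition irrH := mx_of (fun i j => irr_wt i *+ (j == i)).
Definition irrF := mx_of (fun i j => (i == j.+1)%:R).
Definition irrE := mx_of (fun i j => irr_raise i *+ (j == i.+1)).

Lemma irr_raise_top : irr_raise n = 0.
Proof. by rewrite /irr_raise; ring. Qed.

Lemma irrH_mull G : irrH * mx_of G = mx_of (fun i j => irr_wt i * G i j).
Proof.
rewrite mx_ofM; apply: eq_mx_of => i j lt_iN _.
under eq_bigr do rewrite mulrnAl.
by rewrite (sum_mulrb_eq (fun l => irr_wt i * G l j)) lt_iN.
Qed.

Lemma irrF_mull G :
  irrF * mx_of G = mx_of (fun i j => if i is i'.+1 then G i' j else 0).
Proof.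
rewrite mx_ofM; apply: eq_mx_of => -[|i] j lt_iN _; under eq_bigr do rewrite mulr_natl.
  by apply: big1 => l _; exact: mulr0n.
under eq_bigr do rewrite eqSS eq_sym.
by rewrite (sum_mulrb_eq (fun l => G l j)) ltnW.
Qed.

(* No range condition is needed on the right: [irr_raise n = 0]. *)
Lemma irrE_mull G : irrE * mx_of G = mx_of (fun i j => irr_raise i * G i.+1 j).
Proof.
rewrite mx_ofM; apply: eq_mx_of => i j lt_iN _.
under eq_bigr do rewrite mulrnAl.
rewrite (sum_mulrb_eq (fun l => irr_raise i * G l j)).
case: ltnP => [_|le_Ni]; first exact: mulr1n.
have -> : i = n by lia.
by rewrite irr_raise_top !mul0r mul0rn.
Qed.

Lemma irrHE : irrH * irrE - irrE * irrH = irrE *+ 2.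
Proof.
rewrite irrH_mull [irrE * irrH]irrE_mull /irrE mx_ofN mx_ofD mx_ofMn.
apply: eq_mx_of => i j _ _.
case: (j == i.+1); rewrite ?mulr0n ?mulr1n ?mulr0 ?subr0 ?mul0rn //.
by rewrite /irr_wt /irr_raise; ring.
Qed.

Lemma irrHF : irrH * irrF - irrF * irrH = - (irrF *+ 2).
Proof.
rewrite irrH_mull [irrF * irrH]irrF_mull /irrF mx_ofN mx_ofD mx_ofMn mx_ofN.
apply: eq_mx_of => -[|i] j _ _ /=; first by rewrite mulr0 subr0 mul0rn oppr0.
rewrite eqSS [j == i]eq_sym.
case: (i == j); rewrite ?mulr0n ?mulr1n ?mulr0 ?subr0 ?mul0rn ?oppr0 //.
by rewrite /irr_wt; ring.
Qed.

Lemma irrEF : irrE * irrF - irrF * irrE = irrH.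
Proof.
rewrite irrE_mull [irrF * irrE]irrF_mull /irrH mx_ofN mx_ofD.
apply: eq_mx_of => -[|i] j _ _ /=; rewrite eqSS [j == _]eq_sym.
  by case: (0 == j); rewrite ?mulr0n ?mulr1n ?mulr0 ?subr0 // /irr_raise /irr_wt; ring.
by case: (i.+1 == j); rewrite ?mulr0n ?mulr1n ?mulr0 ?subr0 // /irr_raise /irr_wt; ring.
Qed.

Lemma irr_sl2_rels : sl2_rels irrH irrF irrE.
Proof. by split; [split; [exact: irrHE | exact: irrHF] | exact: irrEF]. Qed.

Fixpoint raise_prod (i c : nat) : k :=
  if c is c'.+1 then irr_raise i * raise_prod i.+1 c' else 1.

Lemma irrH_exp_mull b G :
  irrH ^+ b * mx_of G = mx_of (fun i j => irr_wt i ^+ b * G i j).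
Proof.
elim: b => [|b IH].
  by rewrite expr0 mul1r; apply: eq_mx_of => i j _ _; rewrite expr0 mul1r.
by rewrite exprS -mulrA IH irrH_mull; apply: eq_mx_of => i j _ _; rewrite exprS mulrA.
Qed.

Lemma irrF_exp_mull a G :
  irrF ^+ a * mx_of G = mx_of (fun i j => G (i - a)%N j *+ (a <= i)%N).
Proof.
elim: a => [|a IH].
  by rewrite expr0 mul1r; apply: eq_mx_of => i j _ _; rewrite subn0 leq0n mulr1n.
rewrite exprS -mulrA IH irrF_mull; apply: eq_mx_of => -[|i] j _ _.
  by rewrite ltn0 mulr0n.
by rewrite subSS ltnS.
Qed.

Lemma irrE_exp_mull c G :
  irrE ^+ c * mx_of G = mx_of (fun i j => raise_prod i c * G (i + c)%N j).
Proof.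
elim: c G => [|c IH] G.
  by rewrite expr0 mul1r; apply: eq_mx_of => i j _ _; rewrite mul1r addn0.
by rewrite exprS -mulrA IH irrE_mull; apply: eq_mx_of => i j _ _; rewrite /= addSnnS mulrA.
Qed.

Lemma irr_monomial a b c :
  irrF ^+ a * irrH ^+ b * irrE ^+ c = mx_of (fun i j =>
    (irr_wt (i - a) ^+ b * (raise_prod (i - a) c * ((i - a + c)%N == j)%:R)) *+ (a <= i)%N).
Proof.
by rewrite -mulrA -[irrE ^+ c]mulr1 mx_of1 irrE_exp_mull irrH_exp_mull irrF_exp_mull.
Qed.

Lemma irr_wt0 : irr_wt 0 = n%:R.
Proof. by rewrite /irr_wt; ring. Qed.

Lemma raise_prod_neq0 : [pchar k] =i pred0 ->
  forall i c, (i + c <= n)%N -> raise_prod i c != 0.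
Proof.
move=> /pcharf0P char0 i c; elim: c i => [|c IH] i le_icn /=; first exact: oner_neq0.
rewrite mulf_neq0 ?IH ?addSnnS //.
have [d def_n] : exists d, n = (i + d).+1 by exists (n - i.+1)%N; lia.
have -> : irr_raise i = (i.+1 * d.+1)%:R by rewrite /irr_raise def_n; ring.
by rewrite char0.
Qed.
End IrreducibleSl2.

Arguments mx_of {k} n G.
Arguments irr_wt {k} n i.
Arguments irr_raise {k} n i.
Arguments irrH {k} n.
Arguments irrF {k} n.
Arguments irrE {k} n.
Arguments raise_prod {k} n i c.

Section Sl2Spanning.
Variables (k : fieldType) (A : algType k) (Hs Fs Es : A).
Hypothesis HA : is_Usl2 Hs Fs Es.

Definition sl2_mon (a b c : nat) : A := Fs ^+ a * Hs ^+ b * Es ^+ c.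

Definition sl2_comb (M : nat) (g : nat -> nat -> nat -> k) : A :=
  \sum_(0 <= a < M) \sum_(0 <= b < M) \sum_(0 <= c < M) g a b c *: sl2_mon a b c.

Definition sl2_spanned (y : A) : Prop := exists M g, y = sl2_comb M g.

Lemma sl2_comb_widen M M' g : (M <= M')%N ->
  sl2_comb M g = sl2_comb M' (fun a b c => g a b c *+ [&& a < M, b < M & c < M]%N).
Proof.
move=> le_MM'; rewrite /sl2_comb (big_nat_widen _ _ _ _ _ le_MM') big_mkcond /=.
apply: eq_bigr => a _; case: (a < M)%N; last first.
  by rewrite big1 // => b _; rewrite big1 // => c _; rewrite mulr0n scale0r.
rewrite (big_nat_widen _ _ _ _ _ le_MM') big_mkcond /=; apply: eq_bigr => b _.
case: (b < M)%N; last by rewrite big1 // => c _; rewrite mulr0n scale0r.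
rewrite (big_nat_widen _ _ _ _ _ le_MM') big_mkcond /=; apply: eq_bigr => c _.
by case: (c < M)%N; rewrite ?mulr1n ?mulr0n ?scale0r.
Qed.

Lemma sl2_spanned0 : sl2_spanned 0.
Proof. by exists 0%N, (fun _ _ _ => 0); rewrite /sl2_comb big_geq. Qed.

Lemma sl2_spannedD x y : sl2_spanned x -> sl2_spanned y -> sl2_spanned (x + y).
Proof.
move=> [M1 [g1 ->]] [M2 [g2 ->]].
rewrite (sl2_comb_widen g1 (leq_maxl M1 M2)) (sl2_comb_widen g2 (leq_maxr M1 M2)).
set g1' := fun a b c => _; set g2' := fun a b c => _.
exists (maxn M1 M2), (fun a b c => g1' a b c + g2' a b c).
rewrite /sl2_comb -big_split; apply: eq_bigr => a _; rewrite -big_split.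
by apply: eq_bigr => b _; rewrite -big_split; apply: eq_bigr => c _; rewrite scalerDl.
Qed.

Lemma sl2_spannedZ (r : k) x : sl2_spanned x -> sl2_spanned (r *: x).
Proof.
move=> [M [g ->]]; exists M, (fun a b c => r * g a b c).
rewrite /sl2_comb scaler_sumr; apply: eq_bigr => a _; rewrite scaler_sumr.
by apply: eq_bigr => b _; rewrite scaler_sumr; apply: eq_bigr => c _; rewrite scalerA.
Qed.

Lemma sl2_spannedB x y : sl2_spanned x -> sl2_spanned y -> sl2_spanned (x - y).
Proof. by move=> Sx Sy; rewrite -scaleN1r; apply/sl2_spannedD/sl2_spannedZ. Qed.

Lemma sl2_spannedMn x m : sl2_spanned x -> sl2_spanned (x *+ m).
Proof. by rewrite -scaler_nat; apply: sl2_spannedZ. Qed.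

Lemma sl2_spanned_mon a b c : sl2_spanned (sl2_mon a b c).
Proof.
pose M := (a + b + c).+1.
exists M, (fun a' b' c' => (a' == a)%:R * (b' == b)%:R * (c' == c)%:R); rewrite /sl2_comb.
under eq_bigr => a' _ do under eq_bigr => b' _ do
  under eq_bigr => c' _ do rewrite -!scalerA !scaler_nat.
under eq_bigr => a' _ do under eq_bigr => b' _ do
  rewrite !sumrMnl (sum_mulrb_eq (fun c' => sl2_mon a' b' c')).
under eq_bigr => a' _ do
  rewrite sumrMnl (sum_mulrb_eq (fun b' => sl2_mon a' b' c *+ (c < M)%N)).
rewrite (sum_mulrb_eq (fun a' => sl2_mon a' b c *+ (c < M)%N *+ (b < M)%N)).
have [lt_aM lt_bM lt_cM] : [/\ a < M, b < M & c < M]%N by rewrite /M; split; lia.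
by rewrite lt_aM lt_bM lt_cM !mulr1n.
Qed.
Lemma sl2_spanned_mull x z :
  (forall a b c, sl2_spanned (x * sl2_mon a b c)) -> sl2_spanned z -> sl2_spanned (x * z).
Proof.
move=> Smon [M [g ->]]; rewrite /sl2_comb mulr_sumr.
apply: big_ind => [||a _]; [exact: sl2_spanned0 | exact: sl2_spannedD |].
rewrite mulr_sumr; apply: big_ind => [||b _]; [exact: sl2_spanned0 | exact: sl2_spannedD |].
rewrite mulr_sumr; apply: big_ind => [||c _]; [exact: sl2_spanned0 | exact: sl2_spannedD |].
by rewrite -scalerAr; apply/sl2_spannedZ/Smon.
Qed.

Lemma sl2_HF : Hs * Fs = Fs * Hs - Fs *+ 2.
Proof. by case: HA => -[[_ HF] _] _; rewrite -HF addrC subrK. Qed.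

Lemma sl2_EH : Es * Hs = Hs * Es - Es *+ 2.
Proof. by case: HA => -[[HE _] _] _; rewrite -HE opprB addrC subrK. Qed.

Lemma sl2_EF : Es * Fs = Fs * Es + Hs.
Proof. by case: HA => -[_ EF] _; rewrite -EF addrC subrK. Qed.

Lemma sl2_spanned_Fl z : sl2_spanned z -> sl2_spanned (Fs * z).
Proof.
by apply: sl2_spanned_mull => a b c; rewrite /sl2_mon !mulrA -exprS; apply: sl2_spanned_mon.
Qed.

Lemma sl2_spanned_Hl_mon a b c : sl2_spanned (Hs * sl2_mon a b c).
Proof.
elim: a => [|a IH].
  by have := sl2_spanned_mon 0 b.+1 c; rewrite /sl2_mon !expr0 !mul1r exprS mulrA.
have -> : Hs * sl2_mon a.+1 b c = Fs * (Hs * sl2_mon a b c) - (Fs * sl2_mon a b c) *+ 2.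
  by rewrite /sl2_mon exprS -!mulrA [Hs * (Fs * _)]mulrA sl2_HF mulrBl mulrnAl -!mulrA.
apply: sl2_spannedB; first exact: sl2_spanned_Fl.
exact/sl2_spannedMn/sl2_spanned_Fl/sl2_spanned_mon.
Qed.

Lemma sl2_spanned_Hl z : sl2_spanned z -> sl2_spanned (Hs * z).
Proof. exact/sl2_spanned_mull/sl2_spanned_Hl_mon. Qed.

Lemma sl2_spanned_El_mon a b c : sl2_spanned (Es * sl2_mon a b c).
Proof.
elim: a b c => [|a IH] b c; last first.
  have -> : Es * sl2_mon a.+1 b c = Fs * (Es * sl2_mon a b c) + Hs * sl2_mon a b c.
    by rewrite /sl2_mon exprS -!mulrA [Es * (Fs * _)]mulrA sl2_EF mulrDl -!mulrA.
  by apply: sl2_spannedD; [exact: sl2_spanned_Fl | exact: sl2_spanned_Hl_mon].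
rewrite /sl2_mon expr0 mul1r; elim: b c => [|b IH] c.
  by have := sl2_spanned_mon 0 0 c.+1; rewrite /sl2_mon !expr0 !mul1r exprS.
have -> : Es * (Hs ^+ b.+1 * Es ^+ c) =
    Hs * (Es * (Hs ^+ b * Es ^+ c)) - (Es * (Hs ^+ b * Es ^+ c)) *+ 2.
  by rewrite exprS -!mulrA [Es * (Hs * _)]mulrA sl2_EH mulrBl mulrnAl -!mulrA.
by apply: sl2_spannedB; [exact: sl2_spanned_Hl | exact: sl2_spannedMn].
Qed.

Lemma sl2_spanned_El z : sl2_spanned z -> sl2_spanned (Es * z).
Proof. exact/sl2_spanned_mull/sl2_spanned_El_mon. Qed.

Lemma sl2_spanning y : sl2_spanned y.
Proof.
suff Sl x z : sl2_spanned z -> sl2_spanned (x * z).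
  by rewrite -[y]mulr1; apply: Sl; have := sl2_spanned_mon 0 0 0; rewrite /sl2_mon !mulr1.
move: x z; apply: (Usl2_ind (P := fun x => forall z, sl2_spanned z -> sl2_spanned (x * z))
  _ _ _ _ HA).
- by move=> z; rewrite mul1r.
- by move=> x1 x2 S1 S2 z Sz; rewrite mulrDl; apply: sl2_spannedD; [apply: S1 | apply: S2].
- by move=> c x1 S1 z Sz; rewrite -scalerAl; apply/sl2_spannedZ/S1.
- by move=> x1 x2 S1 S2 z Sz; rewrite -mulrA; apply/S1/S2.
- exact: sl2_spanned_Hl.
- exact: sl2_spanned_Fl.
- exact: sl2_spanned_El.
Qed.
End Sl2Spanning.

Lemma pchar0_natr_inj (k : fieldType) : [pchar k] =i pred0 ->
  injective (fun m : nat => m%:R : k).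
Proof.
move=> /pcharf0P char0 m1 m2 /= eq12.
wlog le12 : m1 m2 eq12 / (m1 <= m2)%N.
  by move=> W; case: (leqP m1 m2) => [|/ltnW] /W ->.
have /eqP : ((m2 - m1)%N%:R : k) = 0 by rewrite natrB // eq12 subrr.
by rewrite char0 subn_eq0 => le21; apply/eqP; rewrite eqn_leq le12.
Qed.

Lemma poly_eq0_natr_roots (k : fieldType) (p : {poly k}) (n0 : nat) :
  [pchar k] =i pred0 -> (forall n, (n0 <= n)%N -> p.[n%:R] = 0) -> p = 0.
Proof.
move=> char0 p_roots.
apply: (@roots_geq_poly_eq0 _ p [seq (n0 + i)%N%:R | i <- iota 0 (size p)]).
- by apply/allP => _ /mapP[i _ ->]; apply/rootP/p_roots/leq_addr.
- by rewrite map_inj_uniq ?iota_uniq // => i j /(pchar0_natr_inj char0)/addnI.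
- by rewrite size_map size_iota.
Qed.

(* The monomial maps b_j to a multiple of b_(j - c + a), which for [c >= j]
   can be [b_i] only when [a = i] and [c = j]. *)
Lemma irr_monomial_entry (k : fieldType) (n a b c : nat) (i j : 'I_n.+1) : (j <= c)%N ->
  (irrF n ^+ a * irrH n ^+ b * irrE n ^+ c) i j
    = (n%:R ^+ b * raise_prod n 0 j : k) *+ ((a == i) && (c == j)).
Proof.
move=> le_jc; rewrite irr_monomial mxE.
case: (a =P i) => [<-|ne_ai] /=.
  rewrite subnn leqnn add0n irr_wt0 mulr1n eq_sym.
  by case: eqP => [->|_]; rewrite ?mulr1 ?mulr1n ?mulr0 ?mulr0n.
case: leqP => [le_ai|]; last by rewrite !mulr0n.
have /negPf-> : (i - a + c)%N != j by apply/eqP; lia.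
by rewrite !mulr0 mul0rn mulr0n.
Qed.

Section Faithfulness.
Variables (k : fieldType) (A : algType k) (Hs Fs Es : A).
Hypothesis HA : is_Usl2 Hs Fs Es.
Local Notation comb := (sl2_comb Hs Fs Es).

Definition irr_rep (n : nat) (Phi : A -> 'M[k]_n.+1) : Prop :=
  [/\ alg_hom Phi, Phi Hs = irrH n, Phi Fs = irrF n & Phi Es = irrE n].

Lemma irr_rep_exists n : exists Phi : A -> 'M[k]_n.+1, irr_rep Phi.
Proof.
have [[Phi [hPhi PH PF PE]] _] := HA.2 _ _ _ _ (irr_sl2_rels k n).
by exists Phi.
Qed.

Lemma irr_rep_comb n (Phi : A -> 'M[k]_n.+1) M g : irr_rep Phi ->
  Phi (comb M g) = \sum_(0 <= a < M) \sum_(0 <= b < M) \sum_(0 <= c < M)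
    g a b c *: (irrF n ^+ a * irrH n ^+ b * irrE n ^+ c).
Proof.
case=> hPhi PH PF PE; rewrite (alg_hom_sum hPhi); apply: eq_bigr => a _.
rewrite (alg_hom_sum hPhi); apply: eq_bigr => b _.
rewrite (alg_hom_sum hPhi); apply: eq_bigr => c _.
by rewrite (alg_homZ hPhi) !(alg_homM hPhi) !(alg_homX hPhi) PH PF PE.
Qed.

Lemma irr_rep_comb_entry n (Phi : A -> 'M[k]_n.+1) M g (a0 c0 : nat) : irr_rep Phi ->
  (a0 <= n)%N -> (c0 <= n)%N -> (a0 < M)%N -> (c0 < M)%N ->
  (forall a b c, (a < M)%N -> (b < M)%N -> (c < c0)%N -> g a b c = 0) ->
  Phi (comb M g) (inord a0) (inord c0)
    = raise_prod n 0 c0 * \sum_(0 <= b < M) g a0 b c0 * n%:R ^+ b.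
Proof.
move=> hPhi le_a0n le_c0n lt_a0M lt_c0M g_low.
pose T b := g a0 b c0 * (n%:R ^+ b * raise_prod n 0 c0).
transitivity (\sum_(0 <= a < M) \sum_(0 <= b < M) \sum_(0 <= c < M)
    T b *+ (c == c0) *+ (a == a0)).
  rewrite (irr_rep_comb _ _ hPhi) summxE; apply: eq_big_nat => a /andP[_ lt_aM].
  rewrite summxE; apply: eq_big_nat => b /andP[_ lt_bM].
  rewrite summxE; apply: eq_bigr => c _; rewrite mxE.
  case: (ltnP c c0) => [lt_cc0|le_c0c].
    by rewrite g_low // mul0r (ltn_eqF lt_cc0) mulr0n mul0rn.
  rewrite irr_monomial_entry !inordK ?ltnS // mulrnAr -mulrnA.
  by case: (a =P a0) => [->|_]; case: (c =P c0) => [->|]; rewrite ?mulr0n.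
under eq_bigr => a _ do under eq_bigr => b _ do rewrite sumrMnl (sum_mulrb_eq (fun=> T b)).
under eq_bigr => a _ do rewrite sumrMnl.
rewrite (sum_mulrb_eq (fun=> \sum_(0 <= b < M) T b *+ (c0 < M)%N)) lt_a0M lt_c0M mulr1n.
by rewrite mulr_sumr; apply: eq_bigr => b _; rewrite mulr1n /T mulrA mulrC.
Qed.

(* By induction on [c0]: the entry computed above makes each
   [b |-> g a0 b c0] a polynomial vanishing at every large highest weight. *)
Lemma sl2_faithful : [pchar k] =i pred0 -> forall y,
  (forall n (Phi : A -> 'M[k]_n.+1), irr_rep Phi -> Phi y = 0) -> y = 0.
Proof.
move=> char0 y y_ann; have [M [g def_y]] := sl2_spanning HA y.
suff g0 c : (c < M)%N -> forall a b, (a < M)%N -> (b < M)%N -> g a b c = 0.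
  rewrite def_y /comb /sl2_comb big_nat big1 // => a /= lt_aM.
  rewrite big_nat big1 // => b lt_bM.
  by rewrite big_nat big1 // => c lt_cM; rewrite g0 ?scale0r.
elim/ltn_ind: c => c0 IH lt_c0M a0 b0 lt_a0M lt_b0M.
pose p := \poly_(b < M) g a0 b c0.
suff p0 : p = 0 by have := coef_poly M (fun b => g a0 b c0) b0; rewrite -/p p0 coef0 lt_b0M.
apply: (poly_eq0_natr_roots (n0 := M + M) char0) => n le_n.
have [Phi hPhi] := irr_rep_exists n.
have /matrixP/(_ (inord a0) (inord c0)) := y_ann n Phi hPhi.
rewrite def_y (irr_rep_comb_entry hPhi) ?mxE; try lia; last first.
  by move=> a b c lt_aM lt_bM lt_cc0; apply: IH => //; apply: ltn_trans lt_c0M.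
move/eqP; rewrite mulf_eq0 (negPf (raise_prod_neq0 char0 _)) ?add0n; last lia.
by rewrite horner_poly big_mkord => /eqP.
Qed.
End Faithfulness.

Definition Vh_basis (k : fieldType) (l : nat) : Vamb k :=
  fun j i => ((j == 0%N) && (i == l))%:R.

Lemma Vh_basis_in_Vh (k : fieldType) (l : nat) : in_Vh (Vh_basis k l).
Proof. by move=> j; exists l.+1 => i lt_li; rewrite /Vh_basis (gtn_eqF lt_li) andbF. Qed.

Section HeadMap.
Variables (k : fieldType) (Ua : algType k) (H Xm Xp : Ua) (Us : algType k) (Hs Fs Es : Us).
Variables (pi : Ua -> Us) (psi : nat -> int -> pseries k).
Variable rho : int -> Ua -> Vamb k -> Vamb k.
Hypotheses (HUa : is_Ua H Xm Xp) (HUs : is_Usl2 Hs Fs Es).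
Hypotheses (hpi : alg_hom pi) (piH : pi H = Hs) (piXm : pi Xm = Fs) (piXp : pi Xp = Es).
Hypotheses (Hpsi : colouring psi) (Hrho : forall n : int, is_Vh_action H Xm Xp psi n (rho n)).

(* Modulo h and the b_i with i > n, V_h(n, psi) is the irreducible module of
   dimension n+1. The h^0-part of v is stored in every column of the matrix. *)
Lemma Vh_head_action (n : nat) (r : Ua -> Vamb k -> Vamb k) (Phi : Us -> 'M[k]_n.+1) :
  is_Vh_action H Xm Xp psi n%:Z r -> irr_rep Hs Fs Es Phi -> forall x v,
  Phi (pi x) * mx_of n (fun i _ => v 0%N i) = mx_of n (fun i _ => r x v 0%N i).
Proof.
case=> rD rZ rM r1 [rH rXm rXp] [hPhi PH PF PE]; have [C1 _ _] := Hpsi.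
apply: (Ua_ind (P := fun x => forall v, Phi (pi x) * mx_of n (fun i _ => v 0%N i)
  = mx_of n (fun i _ => r x v 0%N i)) _ _ _ _ HUa)
  => [v|x y IHx IHy v|c x IHx v|x y IHx IHy v|v|v|v].
- by rewrite (alg_hom1 hpi) (alg_hom1 hPhi) mul1r; apply: eq_mx_of => i j _ _; rewrite r1.
- rewrite (alg_homD hpi) (alg_homD hPhi) mulrDl IHx IHy mx_ofD.
  by apply: eq_mx_of => i j _ _; rewrite rD.
- rewrite (alg_homZ hpi) (alg_homZ hPhi) -scalerAl IHx mx_ofZ.
  by apply: eq_mx_of => i j _ _; rewrite rZ.
- rewrite (alg_homM hpi) (alg_homM hPhi) -mulrA IHy IHx.
  by apply: eq_mx_of => i j _ _; rewrite rM.
- by rewrite piH PH irrH_mull; apply: eq_mx_of => i j _ _; rewrite rH.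
- by rewrite piXm PF irrF_mull; apply: eq_mx_of => i j _ _; rewrite rXm.
- rewrite piXp PE irrE_mull; apply: eq_mx_of => i j _ _.
  by rewrite rXp /actXp big_ord1 subn0 C1.
Qed.

Lemma pi_eq0_of_head_annihilator : [pchar k] =i pred0 -> forall u,
  (forall (n : nat) v, in_Vh v -> forall i, rho n%:Z u v 0%N i = 0) -> pi u = 0.
Proof.
move=> char0 u u_ann; apply: (sl2_faithful HUs char0) => n Phi hPhi.
apply/matrixP => i l; rewrite mxE.
have ann : mx_of n (fun i _ => rho n u (Vh_basis k l) 0%N i) = 0.
  by apply/matrixP => i' j; rewrite !mxE u_ann //; exact: Vh_basis_in_Vh.
have /matrixP/(_ i ord0) := Vh_head_action (Hrho n) hPhi u (Vh_basis k l).
rewrite ann; rewrite -mulmxE !mxE (bigD1 l) //= mxE /Vh_basis !eqxx mulr1.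
rewrite big1 ?addr0 // => l' ne_l'l.
by rewrite mxE /Vh_basis (negPf (ne_l'l : l' != l :> nat)) andbF mulr0.
Qed.

Lemma Vh_action0 (n : int) (r : Ua -> Vamb k -> Vamb k) :
  is_Vh_action H Xm Xp psi n r -> forall v j i, r 0 v j i = 0.
Proof. by case=> rD _ _ _ _ v j i; apply: (addrI (r 0 v j i)); rewrite -rD !addr0. Qed.

Lemma head_in_J_eq0 : [pchar k] =i pred0 -> forall X, in_J rho X -> pi (X 0%N) = 0.
Proof.
move=> char0 X [Y [Z [Y_ann def_X]]]; rewrite def_X /= addr0.
apply: (pi_eq0_of_head_annihilator char0) => n v v_in i.
by have := Y_ann n%:Z v v_in 0%N i; rewrite /uh_act big_ord1 subn0.
Qed.

Lemma in_J_uh_h Z : in_J rho (uh_h Z).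
Proof.
exists (fun _ => 0), Z; split=> [n v _ j i|m]; last by rewrite add0r.
by apply: big1 => m _; apply: Vh_action0 (Hrho n) _ _ _.
Qed.

Lemma head_uh_alg_hom : uh_alg_hom (fun X : Uh Ua => pi (X 0%N)).
Proof.
split=> [X Y|c X|X Y|]; rewrite /uh_add /uh_scale /uh_mul /ps_mul /uh_one.
- exact: (alg_homD hpi).
- exact: (alg_homZ hpi).
- by rewrite big_ord1 subn0 (alg_homM hpi).
- exact: (alg_hom1 hpi).
Qed.

(* [X] is its constant term plus [h] times the shifted series, and the
   latter lies in the kernel. *)
Lemma quot_a_hom_head g : quot_a_hom rho pi g -> forall X, g X = pi (X 0%N).
Proof.
case=> -[gD _ _ _] gJ gc X.
have def_X : X = uh_add (uh_const (X 0%N)) (uh_h (fun m => X m.+1)).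
  by apply: funext => -[|m]; rewrite /uh_add /uh_const /uh_h ?addr0 ?add0r.
by rewrite {1}def_X gD gc gJ ?addr0 //; exact: in_J_uh_h.
Qed.

Lemma pi_surj y : exists x, pi x = y.
Proof.
move: y; apply: (Usl2_ind (P := fun y => exists x, pi x = y) _ _ _ _ HUs).
- by exists 1; exact: (alg_hom1 hpi).
- by move=> _ _ [x1 <-] [x2 <-]; exists (x1 + x2); exact: (alg_homD hpi).
- by move=> c _ [x <-]; exists (c *: x); exact: (alg_homZ hpi).
- by move=> _ _ [x1 <-] [x2 <-]; exists (x1 * x2); exact: (alg_homM hpi).
- by exists H.
- by exists Xm.
- by exists Xp.
Qed.
End HeadMap.

Theorem mainTheorem4
  (k : fieldType) (char0 : [pchar k] =i pred0)
  (Ua : algType k) (H Xm Xp : Ua) (HUa : is_Ua H Xm Xp)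
  (Us : algType k) (Hs Fs Es : Us) (HUs : is_Usl2 Hs Fs Es)
  (pi : Ua -> Us)
  (Hpi : [/\ alg_hom pi, pi H = Hs, pi Xm = Fs & pi Xp = Es])
  (psi : nat -> int -> pseries k) (Hpsi : colouring psi)
  (rho : int -> Ua -> Vamb k -> Vamb k)
  (Hrho : forall n : int, is_Vh_action H Xm Xp psi n (rho n)) :
  exists f : Uh Ua -> Us,
    [/\ quot_a_hom rho pi f,
        (forall g : Uh Ua -> Us, quot_a_hom rho pi g -> forall X, g X = f X) &
        (forall y : Us, exists X : Uh Ua, f X = y)].
Proof.
case: Hpi => hpi piH piXm piXp.
exists (fun X => pi (X 0%N)); split.
- split=> //; first exact: head_uh_alg_hom.
  exact: (head_in_J_eq0 HUa HUs hpi piH piXm piXp Hpsi Hrho char0).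
- exact: (quot_a_hom_head Hrho).
- by move=> y; have [x <-] := pi_surj HUs hpi piH piXm piXp y; exists (uh_const x).
Qed.
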